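(* Let $X$ be a Banach space, $\mathfrak{L}$ a metric space of functions on $\mathbb{R}$, and $g\in\mathfrak{L}$ translation compact, with hull $\mathcal{H}(g)$, such that the translations $T(h)$ belong to $\mathcal{C}(\mathcal{H}(g),\mathcal{H}(g))$ for all $h\in\mathbb{R}$. Suppose that for every $f\in\mathcal{H}(g)$ the equation $\frac{d}{dt}u(t)=\mathcal{A}(u(t))+f(t)$ (with $\mathcal{A}$ a densely defined operator on $X$) is well posed for every initial datum $u_0\in X$ at every initial time $\tau\in\mathbb{R}$, generating a process $U_f(t,\tau)$ on $X$, and that $U_f(h+t,h+\tau)=U_{T(h)f}(t,\tau)$ for all $f\in\mathcal{H}(g)$, $h\in\mathbb{R}$, $t\ge\tau$. Assume the family $\{U_f(t,\tau)\}_{f\in\mathcal{H}(g)}$ is uniformly totally dissipative and asymptotically closed, and that the map $f\mapsto U_f(t,\tau)u_0$ from $\mathcal{H}(g)$ to $X$ is continuous for every fixed $t\ge\tau$ and $u_0\in X$. Then $A_{\{g\}}=A_{\mathcal{H}(g)}$, where $A_{\{g\}}$ is the uniform global attractor of the single process $U_g(t,\tau)$ and $A_{\mathcal{H}(g)}$ that of the family $\{U_f(t,\tau)\}_{f\in\mathcal{H}(g)}$.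
   Context: A process on $X$ is a family of maps $U(t,\tau):X\to X$, $t\ge\tau$, with $U(\tau,\tau)=\mathrm{id}_X$ and $U(t,\tau)=U(t,s)U(s,\tau)$ for $t\ge s\ge\tau$. $g$ is translation compact in $\mathfrak{L}$ if $\{g(\cdot+h):h\in\mathbb{R}\}$ is precompact in $\mathfrak{L}$; its closure is the hull $\mathcal{H}(g)$. $[T(h)f](t)=f(h+t)$. For nonempty $B,C\subset X$, $\delta_X(B,C)=\sup_{x\in B}\inf_{\xi\in C}\|x-\xi\|$. For a family $\{U_f(t,\tau)\}_{f\in\Lambda}$ with $\Lambda\subset\mathcal{H}(g)$ (a single process being the case $\Lambda=\{g\}$), a set $K\subset X$ is uniformly attracting if for every bounded $C\subset X$, $\lim_{t-\tau\to\infty}\sup_{f\in\Lambda}\delta_X(U_f(t,\tau)C,K)=0$, and the uniform global attractor $A_\Lambda$ is the compact uniformly attracting set contained in every compact uniformly attracting set. The family is uniformly totally dissipative if for every $\varepsilon>0$ there is a finite $M_\varepsilon\subset X$ whose open $\varepsilon$-neighborhood is uniformly absorbing (for each bounded $C$ there is $t_e$ with $U_f(t,\tau)C$ inside it for all $f\in\mathcal{H}(g)$ whenever $t-\tau\ge t_e$). The family is asymptotically closed if there is a (finite with at least two terms, or infinite) sequence $0=h_0<h_1<\cdots$ such that whenever $f_n\to f$ in $\mathcal{H}(g)$ and $U_{f_n}(h_k,0)x_n\to\xi^k$ as $n\to\infty$ for every $k$, then $U_f(h_k,0)\xi^0=\xi^k$ for every $k$. *)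

From HB Require Import structures.
From mathcomp Require Import all_boot all_order all_algebra.
From mathcomp Require Import all_classical all_reals all_analysis.
Set Implicit Arguments. Unset Strict Implicit. Unset Printing Implicit Defensive.
Import Order.TTheory GRing.Theory Num.Theory.
Import numFieldNormedType.Exports.
Local Open Scope classical_set_scope.
Local Open Scope ring_scope.

Section Defs.
Variables (R : realType) (X : normedModType R).

Definition semidev (B C : set X) : \bar R :=
  ereal_sup [set ereal_inf [set (`|x - xi|)%:E | xi in C] | x in B].

Variable L : Type.
Variable U : L -> R -> R -> X -> X.

Definition is_process (f : L) : Prop :=
  (forall tau, U f tau tau = id) /\
  (forall t s tau, tau <= s -> s <= t -> U f t tau = U f t s \o U f s tau).

Definition unif_attracting (Lam : set L) (K : set X) : Prop :=
  forall C : set X, bounded_set C ->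
    forall eps : R, 0 < eps -> exists T : R, forall t tau : R,
      tau <= t -> T <= t - tau ->
      (ereal_sup [set semidev (U f t tau @` C) K | f in Lam] <= eps%:E)%E.

Definition unif_global_attractor (Lam : set L) (A : set X) : Prop :=
  [/\ compact A, unif_attracting Lam A &
      forall K : set X, compact K -> unif_attracting Lam K -> A `<=` K].

Definition unif_totally_dissipative (H : set L) : Prop :=
  forall eps : R, 0 < eps -> exists M : set X, finite_set M /\
    forall C : set X, bounded_set C -> exists te : R,
      forall f t tau, H f -> tau <= t -> te <= t - tau ->
        U f t tau @` C `<=` [set x | exists2 m, M m & `|x - m| < eps].

End Defs.

Section Defs2.
Variables (R : realType) (X : normedModType R) (L : pseudoMetricType R).
Variable U : L -> R -> R -> X -> X.

(* asymptotically closed: a finite (>= 2 terms) or infinite sequence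
   0 = h_0 < h_1 < ..., indexed by I = {k | k < n} (n >= 2) or I = nat *)
Definition asymp_closed (H : set L) : Prop :=
  exists (I : set nat) (h : nat -> R),
    ((exists n : nat, (2 <= n)%N /\ I = [set k | (k < n)%N]) \/ I = setT) /\
    h 0%N = 0 /\ (forall i j, I i -> I j -> (i < j)%N -> h i < h j) /\
    forall (fn : nat -> L) (f : L) (xn : nat -> X) (xi : nat -> X),
      (forall n, H (fn n)) -> H f -> fn @ \oo --> f ->
      (forall k, I k -> (fun n => U (fn n) (h k) 0 (xn n)) @ \oo --> xi k) ->
      forall k, I k -> U f (h k) 0 (xi 0%N) = xi k.
End Defs2.

(* f' is the translate T(h) f, where ev gives the function on R represented
   by an element of the function space *)
Definition is_translate (R : realType) (L Y : Type) (ev : L -> R -> Y)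
  (h : R) (f f' : L) : Prop := ev f' = (fun t => ev f (h + t)).

Definition hull (R : realType) (L : topologicalType) (Y : Type)
  (ev : L -> R -> Y) (g : L) : set L :=
  closure [set f | exists h : R, is_translate ev h g f].

From HB Require Import structures.
From mathcomp Require Import all_boot all_order all_algebra.
From mathcomp Require Import all_classical all_reals all_analysis.
From mathcomp Require Import lra.
Import Order.TTheory GRing.Theory Num.Theory.
Import numFieldNormedType.Exports.
Local Open Scope classical_set_scope.
Local Open Scope ring_scope.
Set Implicit Arguments. Unset Strict Implicit. Unset Printing Implicit Defensive.

(* The uniform attractor of the hull family is the closure of the union of the
   omega-limit sets of bounded sets: total dissipativity makes this set totally
   bounded, hence compact in the Banach space X, and a compactness argument on
   trajectories with elapsed time tending to infinity shows that it attracts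
   bounded sets uniformly; it is contained in every closed uniformly attracting
   set by construction.  Any compact set attracting for the single process U_g
   also attracts uniformly over the hull: f in H(g) is a limit of translates
   T(h) g, U_{T(h) g}(t, tau) = U_g(h + t, h + tau) is attracted uniformly in h,
   and f |-> U_f(t, tau) x is continuous. *)

Section FiniteNets.
Variables (R : realType) (X : completeNormedModType R).

Definition seq_nbhs (M : seq X) (e : R) : set X :=
  [set x | exists2 m, m \in M & `|x - m| < e].

Lemma ultra_seq_nbhs (F : set_system X) (FU : UltraFilter F) (M : seq X) (e : R) :
  F (seq_nbhs M e) -> exists2 m, m \in M & F (ball m e).
Proof.
elim: M => [|a s IH] FM.
  exfalso; apply: (filter_not_empty F); apply: filterS FM => x [m].
  by rewrite in_nil.
have [Fa|Fna] := in_ultra_setVsetC (ball a e) FU.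
  by exists a => //; rewrite mem_head.
have /IH [m ms Fm] : F (seq_nbhs s e).
  apply: filterS (filterI FM Fna) => x [[m]].
  rewrite in_cons => /orP[/eqP->|ms] xm nb.
    by exfalso; apply: nb; rewrite -ball_normE /= distrC.
  by exists m.
by exists m => //; rewrite in_cons ms orbT.
Qed.

Lemma finite_nets_precompact (S : set X) :
  (forall e : R, 0 < e -> exists M : seq X, S `<=` seq_nbhs M e) ->
  precompact S.
Proof.
move=> netS; rewrite precompactE compact_ultra => F FU FS.
have PF : ProperFilter F by apply: ultra_proper.
have cauchyF : cauchy_ex F.
  move=> e e0; have e2 : 0 < e / 2 by rewrite divr_gt0.
  have [M SM] := netS (e / 2) e2.
  suff /(@ultra_seq_nbhs F FU) [m _ Fm] : F (seq_nbhs M e) by exists m.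
  apply: filterS FS => x clx.
  have [s [Ss]] := clx (ball x (e / 2)) (nbhsx_ballx x (e / 2) e2).
  rewrite -ball_normE /= => xs.
  have [m mM sm] := SM s Ss; exists m => //.
  have := ler_distD s x m; lra.
have cvF : cvg F := cauchy_cvg F (cauchy_exP F cauchyF).
exists (lim F); split; last exact: cvF.
apply: closed_closure => B /cvF FB.
exact: (@filter_ex _ F _ _ (filterI FS FB)).
Qed.

End FiniteNets.

Section Attraction.
Variables (R : realType) (X : normedModType R) (L : Type)
  (U : L -> R -> R -> X -> X).

Definition unif_attracting_pt (Lam : set L) (K : set X) :=
  forall C : set X, bounded_set C -> forall eps : R, 0 < eps -> exists T : R,
    forall f t tau x, Lam f -> tau <= t -> T <= t - tau -> C x ->
      exists2 k, K k & `|U f t tau x - k| < eps.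

Lemma unif_attractingP (Lam : set L) (K : set X) :
  unif_attracting U Lam K <-> unif_attracting_pt Lam K.
Proof.
split=> attK C bC eps e0.
- have e2 : 0 < eps / 2 by rewrite divr_gt0.
  have [T hT] := attK C bC (eps / 2) e2.
  exists T => f t tau x Lf le le' Cx; apply: contrapT => farK.
  have far : (eps%:E <= ereal_inf [set (`|U f t tau x - xi|)%:E | xi in K])%E.
    apply: le_ereal_inf_tmp => _ [k Kk <-]; rewrite lee_fin leNgt.
    by apply/negP => lt; apply: farK; exists k.
  have inf_le_dev : (ereal_inf [set (`|U f t tau x - xi|)%:E | xi in K]
      <= semidev (U f t tau @` C) K)%E.
    by apply: ereal_sup_ubound; exists (U f t tau x) => //; exists x.
  have dev_le_sup : (semidev (U f t tau @` C) K <=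
     ereal_sup [set semidev (U f0 t tau @` C) K | f0 in Lam])%E.
    by apply: ereal_sup_ubound; exists f.
  have := le_trans far (le_trans inf_le_dev (le_trans dev_le_sup (hT _ _ le le'))).
  rewrite lee_fin; lra.
- have [T hT] := attK C bC eps e0.
  exists T => t tau le le'.
  apply: ge_ereal_sup => _ [f Lf <-].
  apply: ge_ereal_sup => _ [_ [x Cx <-] <-].
  have [k Kk lt] := hT f t tau x Lf le le' Cx.
  apply: (@le_trans _ _ (`|U f t tau x - k|)%:E).
    by apply: ereal_inf_lbound; exists k.
  by rewrite lee_fin ltW.
Qed.

Lemma unif_attracting_subset (Lam Lam' : set L) (K : set X) :
  Lam' `<=` Lam -> unif_attracting U Lam K -> unif_attracting U Lam' K.
Proof.
move=> sLam /unif_attractingP attK; apply/unif_attractingP => C bC eps e0.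
have [T hT] := attK C bC eps e0.
by exists T => f t tau x /sLam; apply: hT.
Qed.

End Attraction.

Section UniformAttractor.
Variables (R : realType) (X : completeNormedModType R) (L : Type)
  (U : L -> R -> R -> X -> X) (H : set L).
Hypothesis dissipative : unif_totally_dissipative U H.

Definition omega_limit (C : set X) : set X :=
  [set y | forall e : R, 0 < e -> forall n : R, exists f t tau x,
    [/\ H f, tau <= t, n <= t - tau, C x & `|U f t tau x - y| < e]].

Definition attractor : set X := closure (\bigcup_(C in bounded_set) omega_limit C).

Lemma dissipative_seq_nbhs (e : R) : 0 < e -> exists M : seq X,
  forall C, bounded_set C -> exists te : R, forall f t tau,
    H f -> tau <= t -> te <= t - tau -> U f t tau @` C `<=` seq_nbhs M e.
Proof.
move=> e0; have [M [finM absM]] := dissipative e0.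
have [s sM] := (finite_seqP M).1 finM.
exists s => C bC; have [te hte] := absM C bC.
exists te => f t tau Hf le le' y Uy.
have [m Mm d] := hte f t tau Hf le le' y Uy.
by exists m => //; move: Mm; rewrite sM.
Qed.

Lemma attractor_compact : compact attractor.
Proof.
rewrite -precompactE; apply: finite_nets_precompact => e e0.
have e2 : 0 < e / 2 by rewrite divr_gt0.
have [M absM] := dissipative_seq_nbhs e2.
exists M => y [C bC omy].
have [te hte] := absM C bC.
have [f [t [tau [x [Hf le le' Cx d]]]]] := omy (e / 2) e2 te.
have [m mM dm] := hte f t tau Hf le le' _ (ex_intro2 _ _ x Cx erefl).
exists m => //.
have := ler_distD (U f t tau x) y m; rewrite (distrC y (U f t tau x)); lra.
Qed.

Lemma attractor_min (K : set X) :
  closed K -> unif_attracting_pt U H K -> attractor `<=` K.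
Proof.
move=> clK attK; rewrite /attractor closureE; apply: smallest_sub => // y [C bC omy].
rewrite (closure_id K).1 // => B /nbhs_ballP [e e0 eB].
have e2 : 0 < e / 2 by rewrite divr_gt0.
have [T hT] := attK C bC (e / 2) e2.
have [f [t [tau [x [Hf le le' Cx d]]]]] := omy (e / 2) e2 T.
have [k Kk dk] := hT f t tau x Hf le le' Cx.
exists k; split => //; apply: eB; rewrite -ball_normE /=.
have := ler_distD (U f t tau x) y k; rewrite (distrC y (U f t tau x)); lra.
Qed.

Section Trajectories.
Variables (C : set X) (f : nat -> L) (t tau : nat -> R) (x : nat -> X).
Hypotheses (bC : bounded_set C)
  (trajectory : forall n, [/\ H (f n), tau n <= t n, n%:R <= t n - tau n & C (x n)]).

Let y n := U (f n) (t n) (tau n) (x n).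

Lemma trajectory_precompact : precompact (range y).
Proof.
apply: finite_nets_precompact => e e0.
have [M absM] := dissipative_seq_nbhs e0.
have [te hte] := absM C bC.
have [N teN] : exists N : nat, te < N%:R.
  by exists (Num.truncn te).+1; exact: truncnS_gt.
exists (M ++ [seq y k | k <- iota 0 N]) => _ [n _ <-].
have [nN|Nn] := ltnP n N.
  exists (y n); last by rewrite subrr normr0.
  by rewrite mem_cat; apply/orP; right; apply/mapP; exists n; rewrite ?mem_iota.
have [Hfn le elapsed Cxn] := trajectory n.
have te_le : te <= t n - tau n.
  have : (N%:R : R) <= n%:R by rewrite ler_nat.
  lra.
have [m mM dm] := hte _ _ _ Hfn le te_le _ (ex_intro2 _ _ _ Cxn erefl).
by exists m => //; rewrite mem_cat mM.
Qed.

Lemma trajectory_cluster : exists2 z, omega_limit C z & cluster (y @ \oo) z.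
Proof.
have near_range : \forall n \near \oo, closure (range y) (y n).
  by apply: filterE => n; apply: subset_closure; exists n.
have := trajectory_precompact; rewrite precompactE => cpt.
have [z [_ clz]] := cpt (y @ \oo) _ near_range.
exists z => // e e0 n0.
have [N0 n0N0] : exists N0 : nat, n0 < N0%:R.
  by exists (Num.truncn n0).+1; exact: truncnS_gt.
have tail : (y @ \oo) (y @` [set n | (N0 <= n)%N]).
  by apply: filterS (nbhs_infty_ge N0) => m mN; exists m.
have [_ [[m mN <-]]] := clz _ _ tail (nbhsx_ballx z e e0).
rewrite -ball_normE /= distrC => yz.
have [Hfm le elapsed Cxm] := trajectory m.
exists (f m), (t m), (tau m), (x m); split => //.
have : (N0%:R : R) <= m%:R by rewrite ler_nat.
lra.
Qed.

End Trajectories.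

Lemma attractor_attracting : unif_attracting_pt U H attractor.
Proof.
move=> C bC eps e0; apply: contrapT => not_att.
have far n : exists p : L * R * R * X,
    [/\ H p.1.1.1, p.1.2 <= p.1.1.2, n%:R <= p.1.1.2 - p.1.2, C p.2 &
     forall k, attractor k -> eps <= `|U p.1.1.1 p.1.1.2 p.1.2 p.2 - k|].
  apply: contrapT => no_far; apply: not_att; exists n%:R.
  move=> f t tau x Hf le le' Cx; apply: contrapT => farA; apply: no_far.
  exists (f, t, tau, x); split => // k Ak.
  by rewrite leNgt; apply/negP => lt; apply: farA; exists k.
have [p hp] := choice far.
pose f n := (p n).1.1.1; pose t n := (p n).1.1.2; pose tau n := (p n).1.2.
pose x n := (p n).2; pose y n := U (f n) (t n) (tau n) (x n).
have trajectory n : [/\ H (f n), tau n <= t n, n%:R <= t n - tau n & C (x n)].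
  by case: (hp n).
have [z omz /(_ (range y))] := trajectory_cluster bC trajectory.
have near_range : \forall n \near \oo, range y (y n) by apply: filterE => n; exists n.
move=> /(_ _ near_range (nbhsx_ballx z eps e0)) [_ [[m _ <-]]].
have [_ _ _ _ far_m] := hp m.
have := far_m z (subset_closure (ex_intro2 _ _ C bC omz)).
rewrite -ball_normE /= distrC; lra.
Qed.

Lemma attractor_global : unif_global_attractor U H attractor.
Proof.
split; first exact: attractor_compact.
  exact/unif_attractingP/attractor_attracting.
move=> K cK /unif_attractingP attK; apply: attractor_min => //.
exact: compact_closed (@norm_hausdorff R X) cK.
Qed.

End UniformAttractor.

Section Hull.
Variables (R : realType) (X : normedModType R) (L : pseudoMetricType R)
  (ev : L -> R -> X) (g : L) (T : R -> L -> L) (U : L -> R -> R -> X -> X).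

Lemma hull_self : hull ev g g.
Proof.
apply: subset_closure; exists 0.
by rewrite /is_translate; apply: funext => t; rewrite add0r.
Qed.

Hypotheses (ev_inj : injective ev) (translate_g : forall h, is_translate ev h g (T h g))
  (translate_U : forall h t tau, tau <= t -> U g (h + t) (h + tau) = U (T h g) t tau)
  (continuous_U : forall t tau x, tau <= t ->
     {within hull ev g, continuous (fun f => U f t tau x)}).

Lemma unif_attracting_hull (K : set X) :
  unif_attracting U [set g] K -> unif_attracting U (hull ev g) K.
Proof.
move=> /unif_attractingP attK; apply/unif_attractingP => C bC eps e0.
have e2 : 0 < eps / 2 by rewrite divr_gt0.
have [T0 hT0] := attK C bC (eps / 2) e2.
exists T0 => f t tau x Hf le le' Cx.
have := @continuous_U t tau x le.
move=> /subspace_continuousP /(_ f Hf) /cvgrPdist_lt /(_ (eps / 2) e2) near_f.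
have [f' [[h trh] near_f']] := Hf _ near_f.
have f'E : T h g = f' by apply: ev_inj; rewrite trh (translate_g h).
have le_h : h + tau <= h + t by rewrite lerD2l.
have elapsed_h : T0 <= (h + t) - (h + tau) by lra.
have [k Kk] := hT0 g (h + t) (h + tau) x erefl le_h elapsed_h Cx.
rewrite translate_U // f'E => dk; exists k => //.
have Hf' : hull ev g f' by apply: subset_closure; exists h.
have := near_f' Hf'; rewrite /= => d1.
have := ler_distD (U f' t tau x) (U f t tau x) k; lra.
Qed.

End Hull.

Theorem theorem7p4
  (R : realType) (X : completeNormedModType R)
  (L : pseudoMetricType R) (ev : L -> R -> X) (g : L)
  (T : R -> L -> L) (U : L -> R -> R -> X -> X) :
  hausdorff_space L ->
  injective ev ->
  (* g translation compact *)
  (forall h : R, exists f, is_translate ev h g f) ->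
  compact (hull ev g) ->
  (* T(h) in C(H(g), H(g)) *)
  (forall h f, hull ev g f -> is_translate ev h f (T h f)) ->
  (forall h, T h @` hull ev g `<=` hull ev g) ->
  (forall h, {within hull ev g, continuous (T h)}) ->
  (* processes and translation identity *)
  (forall f, hull ev g f -> is_process U f) ->
  (forall f h t tau, hull ev g f -> tau <= t ->
     U f (h + t) (h + tau) = U (T h f) t tau) ->
  unif_totally_dissipative U (hull ev g) ->
  asymp_closed U (hull ev g) ->
  (forall t tau u0, tau <= t ->
     {within hull ev g, continuous (fun f => U f t tau u0)}) ->
  exists A : set X,
    unif_global_attractor U [set g] A /\
    unif_global_attractor U (hull ev g) A.
Proof.
move=> _ ev_inj _ _ translate_T _ _ _ translate_U dissipative _ continuous_U.
have g_hull : hull ev g g by exact: hull_self.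
have attracting_hull (K : set X) :
    unif_attracting U [set g] K -> unif_attracting U (hull ev g) K.
  by apply: unif_attracting_hull => // h *; [exact: translate_T | exact: translate_U].
have [cA attA minA] := attractor_global dissipative.
exists (attractor U (hull ev g)); split=> //; split=> //.
- by apply: unif_attracting_subset attA => f ->.
- by move=> K cK /attracting_hull; apply: minA.
Qed.
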